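(* Let $(R,\mathfrak m)$ be a Noetherian local ring and $M$ a finitely generated $R$-module with $\dim M=d\ge 1$. Let $k$ and $\ell$ be two positive integers. Then there exists an integer $n_3>\ell$ such that $$(\mathfrak m^{n_3}M+H^0_{\mathfrak m}(M)):_M\mathfrak m^{k}\subseteq \mathfrak m^{\ell}M+H^0_{\mathfrak m}(M).$$
   Context: For a submodule $N\subseteq M$ and an ideal $J$, $N:_MJ=\{x\in M: Jx\subseteq N\}$. $H^0_{\mathfrak m}(M)$ is the submodule of elements of $M$ annihilated by some power of $\mathfrak m$. *)

From HB Require Import structures.
From mathcomp Require Import all_boot all_order all_algebra.
Set Implicit Arguments. Unset Strict Implicit. Unset Printing Implicit Defensive.
Import GRing.Theory.
Local Open Scope ring_scope.

Section CommAlg.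
Variable R : comNzRingType.

Definition ideal (I : R -> Prop) : Prop :=
  I 0 /\ (forall x y, I x -> I y -> I (x + y)) /\ (forall r x, I x -> I (r * x)).

Definition prime_ideal (P : R -> Prop) : Prop :=
  ideal P /\ ~ P 1 /\ (forall x y, P (x * y) -> P x \/ P y).

Definition maximal_ideal (m : R -> Prop) : Prop :=
  ideal m /\ ~ m 1 /\
  (forall J, ideal J -> (forall x, m x -> J x) -> (forall x, J x -> m x) \/ J 1).

Definition local_ring (m : R -> Prop) : Prop :=
  maximal_ideal m /\ (forall J, maximal_ideal J -> forall x, J x <-> m x).

Definition noetherian : Prop :=
  forall I : nat -> R -> Prop, (forall n, ideal (I n)) ->
    (forall n x, I n x -> I n.+1 x) ->
    exists N, forall n x, (N <= n)%N -> I n x -> I N x.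

Definition ideal_gen (S : R -> Prop) : R -> Prop :=
  fun x => forall I, ideal I -> (forall y, S y -> I y) -> I x.

Fixpoint ideal_pow (m : R -> Prop) (n : nat) : R -> Prop :=
  match n with
  | O => fun _ => True
  | S n' => ideal_gen (fun x => exists a b, m a /\ ideal_pow m n' b /\ x = a * b)
  end.

Variable M : lmodType R.

Definition submodule (N : M -> Prop) : Prop :=
  N 0 /\ (forall x y, N x -> N y -> N (x + y)) /\ (forall r x, N x -> N (r *: x)).

Definition submod_gen (S : M -> Prop) : M -> Prop :=
  fun x => forall N, submodule N -> (forall y, S y -> N y) -> N x.

Definition fin_gen : Prop :=
  exists s : seq M, forall x : M, exists c : 'I_(size s) -> R,
    x = \sum_(i < size s) c i *: s`_i.

Definition ideal_mul_mod (I : R -> Prop) : M -> Prop :=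
  submod_gen (fun y => exists a x, I a /\ y = a *: x).

Definition submod_add (N1 N2 : M -> Prop) : M -> Prop :=
  fun x => exists y z, N1 y /\ N2 z /\ x = y + z.

Definition submod_colon (N : M -> Prop) (J : R -> Prop) : M -> Prop :=
  fun x => forall a, J a -> N (a *: x).

Definition H0 (m : R -> Prop) : M -> Prop :=
  fun x => exists n, forall a, ideal_pow m n a -> a *: x = 0.

Definition ann : R -> Prop := fun a => forall x : M, a *: x = 0.

(* Krull dimension of M (= dim R/Ann M) is at least n: there is a strict chain
   P_0 < P_1 < ... < P_n of prime ideals containing Ann(M). *)
Definition mod_dim_ge (n : nat) : Prop :=
  exists P : nat -> R -> Prop,
    (forall i, (i <= n)%N -> prime_ideal (P i)) /\
    (forall a, ann a -> P 0%N a) /\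
    (forall i, (i < n)%N -> (forall x, P i x -> P i.+1 x) /\ exists x, P i.+1 x /\ ~ P i x).

End CommAlg.

From HB Require Import structures.
From mathcomp Require Import all_boot all_order all_algebra.
From mathcomp Require Import ring.
From Stdlib Require Import Classical ClassicalEpsilon.
Set Implicit Arguments. Unset Strict Implicit. Unset Printing Implicit Defensive.
Import GRing.Theory.
Local Open Scope ring_scope.

(* By induction on k it suffices to treat k = 1: given l, find n such that
   m x in m^n M + H0(M) forces x in m^l M + H0(M).  Let g_1, ..., g_s generate m
   and map x to (g_i x)_i in M^s.  With U = (g_i z)_i (z in m^l M) + H0(M)^s, the
   vector (g_i x)_i is killed into U by m^l and, by hypothesis, lies in
   m^n M^s + U.  In a Noetherian module, (U :_V m^oo) and m^n V + U meet in U for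
   n large (an Artin-Rees type fact, proved by induction on the generators of m
   from the stabilisation of the colon chain U :_V a^j), so (g_i x)_i is in U:
   g_i (x - z) is in H0(M) for all i and some z in m^l M, hence x - z is in
   H0(M). *)

Section Ideals.
Variable R : comNzRingType.
Implicit Types (I J S : R -> Prop) (a b c : R).

Lemma ideal0 I : ideal I -> I 0. Proof. by case. Qed.

Lemma idealD I b c : ideal I -> I b -> I c -> I (b + c).
Proof. by case=> _ [hD _]; apply: hD. Qed.

Lemma idealM I a b : ideal I -> I b -> I (a * b).
Proof. by case=> _ [_ hM]; apply: hM. Qed.

Lemma ideal_gen_ideal S : ideal (ideal_gen S).
Proof.
split; [|split].
- by move=> I [? _] _.
- by move=> b c hb hc I hI hS; apply: idealD (hb I hI hS) (hc I hI hS).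
- by move=> a b hb I hI hS; apply: idealM (hb I hI hS).
Qed.

Lemma mem_ideal_gen S b : S b -> ideal_gen S b.
Proof. by move=> hb I _; apply. Qed.

Lemma ideal_gen_min S I : ideal I -> (forall b, S b -> I b) ->
  forall b, ideal_gen S b -> I b.
Proof. by move=> hI hS b; apply. Qed.

Lemma ideal_pow_ideal J n : ideal (ideal_pow J n).
Proof. by case: n => [|n]; [split|exact: ideal_gen_ideal]. Qed.

Lemma ideal_pow_mul J n a b : J a -> ideal_pow J n b -> ideal_pow J n.+1 (a * b).
Proof. by move=> ha hb; apply: mem_ideal_gen; exists a, b. Qed.

Lemma ideal_powS J J' : (forall a, J a -> J' a) ->
  forall n b, ideal_pow J n b -> ideal_pow J' n b.
Proof.
move=> sJJ'; elim=> [|n IHn] b //= hb.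
apply: (ideal_gen_min (ideal_gen_ideal _) _ hb) => _ [a [c [ha [hc ->]]]].
by apply: ideal_pow_mul; [apply: sJJ'|apply: IHn].
Qed.

Lemma ideal_pow_anti J p q b : (q <= p)%N -> ideal_pow J p b -> ideal_pow J q b.
Proof.
have ideal_powSn n c : ideal_pow J n.+1 c -> ideal_pow J n c.
  elim: n c => [|n IHn] c // hc.
  apply: (ideal_gen_min (ideal_pow_ideal J n.+1) _ hc) => _ [a [d [ha [hd ->]]]].
  by apply: ideal_pow_mul ha (IHn d hd).
elim: p b => [|p IHp] b; first by rewrite leqn0 => /eqP ->.
by rewrite leq_eqVlt => /orP [/eqP -> //|hqp] hb; apply: IHp hqp (ideal_powSn _ _ hb).
Qed.

Lemma expr_ideal_pow J a t : J a -> ideal_pow J t (a ^+ t).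
Proof. by move=> ha; elim: t => [|t IHt] //; rewrite exprS; apply: ideal_pow_mul. Qed.

Lemma ideal_pow_zero J n : (forall a, J a -> a = 0) -> forall b, ideal_pow J n.+1 b -> b = 0.
Proof.
move=> hJ; have h0 : ideal (fun c : R => c = 0).
  by split; [|split] => // [? ? -> ->|? ? ->]; rewrite ?addr0 ?mulr0.
by apply: (ideal_gen_min h0) => _ [a [c [/hJ -> [_ ->]]]]; rewrite mul0r.
Qed.

(* If J lies in J' + aR, expanding products of p + q elements of J shows that
   J^(p+q) lies in J'^p + a^q R. *)
Lemma ideal_pow_add_split J J' a : ideal J' ->
  (forall c, J c -> exists c' r, J' c' /\ c = c' + r * a) ->
  forall n p q b, (p + q = n)%N -> ideal_pow J n b ->
  exists c r, ideal_pow J' p c /\ b = c + r * a ^+ q.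
Proof.
move=> hJ' hJ; elim=> [|n IHn] p q b hpq hb.
  move: hpq => /eqP; rewrite addn_eq0 => /andP [/eqP -> /eqP ->].
  by exists b, 0; rewrite mul0r addr0.
have hsplit : ideal (fun b => exists c r, ideal_pow J' p c /\ b = c + r * a ^+ q).
  split; [|split].
  - by exists 0, 0; rewrite mul0r addr0; split => //; apply: ideal0 (ideal_pow_ideal _ _).
  - move=> _ _ [c1 [r1 [h1 ->]]] [c2 [r2 [h2 ->]]]; exists (c1 + c2), (r1 + r2).
    by split; [apply: idealD (ideal_pow_ideal _ _) h1 h2|rewrite mulrDl addrACA].
  - move=> r _ [c1 [r1 [h1 ->]]]; exists (r * c1), (r * r1).
    by split; [apply: idealM (ideal_pow_ideal _ _) h1|rewrite mulrDr mulrA].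
apply: (ideal_gen_min hsplit _ hb) => _ [c [b' [hc [hb' ->]]]]; clear hsplit.
case: p hpq => [|p] hpq; first by exists (c * b'), 0; rewrite mul0r addr0.
case: q hpq => [|q] hpq.
  by exists 0, (c * b'); rewrite expr0 mulr1 add0r; split => //; apply: ideal0 (ideal_pow_ideal _ _).
have [c' [s [hc' ->]]] := hJ c hc.
have [c1 [r1 [hc1 e1]]] : exists c r, ideal_pow J' p c /\ b' = c + r * a ^+ q.+1.
  by apply: IHn hb'; move: hpq; rewrite addSn => -[].
have [c2 [r2 [hc2 e2]]] : exists c r, ideal_pow J' p.+1 c /\ b' = c + r * a ^+ q.
  by apply: IHn hb'; move: hpq; rewrite addnS => -[].
exists (c' * c1 + s * a * c2), (c' * r1 + s * r2); split.
  by apply: idealD (ideal_pow_ideal _ _) (ideal_pow_mul _ _) (idealM _ (ideal_pow_ideal _ _) hc2).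
by rewrite mulrDl {1}e1 e2 exprS; ring.
Qed.

End Ideals.

Section Submodules.
Variable R : comNzRingType.
Variable V : lmodType R.
Implicit Types (N U : V -> Prop) (S : V -> Prop) (I : R -> Prop) (x y : V).

Lemma submod0 N : submodule N -> N 0. Proof. by case. Qed.

Lemma submodD N x y : submodule N -> N x -> N y -> N (x + y).
Proof. by case=> _ [hD _]; apply: hD. Qed.

Lemma submodZ N r x : submodule N -> N x -> N (r *: x).
Proof. by case=> _ [_ hZ]; apply: hZ. Qed.

Lemma submodB N x y : submodule N -> N x -> N y -> N (x - y).
Proof. by move=> hN hx hy; rewrite -scaleN1r; apply: submodD (submodZ _ _ _). Qed.

Lemma submod_sum N (T : Type) (r : seq T) (F : T -> V) :
  submodule N -> (forall i, N (F i)) -> N (\sum_(i <- r) F i).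
Proof.
move=> hN hF; elim: r => [|i r IHr]; first by rewrite big_nil; apply: submod0.
by rewrite big_cons; apply: submodD.
Qed.

Lemma submod_gen_submodule S : submodule (submod_gen S).
Proof.
split; [|split].
- by move=> N [? _] _.
- by move=> x y hx hy N hN hS; apply: submodD (hx N hN hS) (hy N hN hS).
- by move=> r x hx N hN hS; apply: submodZ (hx N hN hS).
Qed.

Lemma submod_gen_min S N : submodule N -> (forall y, S y -> N y) ->
  forall x, submod_gen S x -> N x.
Proof. by move=> hN hS x; apply. Qed.

Lemma ideal_mul_mod_submodule I : submodule (ideal_mul_mod (M:=V) I).
Proof. exact: submod_gen_submodule. Qed.

Lemma mem_ideal_mul_mod I a x : I a -> ideal_mul_mod (M:=V) I (a *: x).
Proof. by move=> ha N _ hS; apply: hS; exists a, x. Qed.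

Lemma ideal_mul_mod_zero I : (forall a, I a -> a = 0) -> forall x, ideal_mul_mod (M:=V) I x -> x = 0.
Proof.
move=> hI; have h0 : submodule (fun x : V => x = 0).
  by split; [|split] => // [? ? -> ->|? ? ->]; rewrite ?addr0 ?scaler0.
by apply: (submod_gen_min h0) => _ [a [y [/hI -> ->]]]; rewrite scale0r.
Qed.

Lemma ideal_mul_modS I I' : (forall a, I a -> I' a) ->
  forall x, ideal_mul_mod (M:=V) I x -> ideal_mul_mod (M:=V) I' x.
Proof.
move=> sII' x hx; apply: (submod_gen_min (ideal_mul_mod_submodule I') _ hx).
move=> _ [a [y [ha ->]]].
by apply: mem_ideal_mul_mod; apply: sII'.
Qed.

Lemma submod_add_submodule N1 N2 :
  submodule N1 -> submodule N2 -> submodule (submod_add N1 N2).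
Proof.
move=> h1 h2; split; [|split].
- by exists 0, 0; rewrite addr0; split; [apply: submod0|split; [apply: submod0|]].
- move=> _ _ [x1 [x2 [hx1 [hx2 ->]]]] [y1 [y2 [hy1 [hy2 ->]]]].
  exists (x1 + y1), (x2 + y2); rewrite addrACA.
  by split; [apply: submodD|split; [apply: submodD|]].
- move=> r _ [x1 [x2 [hx1 [hx2 ->]]]]; exists (r *: x1), (r *: x2); rewrite scalerDr.
  by split; [apply: submodZ|split; [apply: submodZ|]].
Qed.

Lemma submod_addl N1 N2 x : submodule N2 -> N1 x -> submod_add N1 N2 x.
Proof. by move=> h2 hx; exists x, 0; rewrite addr0; split; [|split; [apply: submod0|]]. Qed.

Lemma submod_addr N1 N2 x : submodule N1 -> N2 x -> submod_add N1 N2 x.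
Proof. by move=> h1 hx; exists 0, x; rewrite add0r; split; [apply: submod0|]. Qed.

Lemma submod_addS N1 N1' N2 x : (forall y, N1 y -> N1' y) ->
  submod_add N1 N2 x -> submod_add N1' N2 x.
Proof. by move=> s11' [y [z [hy [hz ->]]]]; exists y, z; split; [apply: s11'|]. Qed.

Lemma H0_submodule (m : R -> Prop) : submodule (H0 (M:=V) m).
Proof.
split; [|split].
- by exists 0%N => a _; rewrite scaler0.
- move=> x y [p hp] [q hq]; exists (maxn p q) => a ha.
  by rewrite scalerDr hp ?hq ?addr0 //; apply: ideal_pow_anti ha; rewrite ?leq_maxl ?leq_maxr.
- move=> r x [p hp]; exists p => a ha.
  by rewrite scalerA mulrC -scalerA hp // scaler0.
Qed.

Fixpoint in_span (vs : seq V) x : Prop :=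
  if vs is v :: vs' then exists c w, in_span vs' w /\ x = c *: v + w else x = 0.

Lemma in_span_submodule vs : submodule (in_span vs).
Proof.
elim: vs => [|v vs IHvs] /=.
  by split; [|split] => [|x y -> ->|r x ->]; rewrite ?addr0 ?scaler0.
split; [|split].
- by exists 0, 0; rewrite scale0r addr0; split; first exact: submod0.
- move=> _ _ [c [w [hw ->]]] [d [u [hu ->]]]; exists (c + d), (w + u).
  by rewrite scalerDl addrACA; split; first exact: submodD.
- move=> r _ [c [w [hw ->]]]; exists (r * c), (r *: w).
  by rewrite scalerDr scalerA; split; first exact: submodZ.
Qed.

Lemma mem_in_span vs v : v \in vs -> in_span vs v.
Proof.
elim: vs => [|u vs IHvs] //=; rewrite in_cons => /orP [/eqP ->|hv].
  by exists 1, 0; rewrite scale1r addr0; split; first exact: submod0 (in_span_submodule _).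
by exists 0, v; rewrite scale0r add0r; split; first exact: IHvs.
Qed.

Lemma in_span_min vs N : submodule N -> (forall v, v \in vs -> N v) ->
  forall x, in_span vs x -> N x.
Proof.
move=> hN; elim: vs => [|v vs IHvs] hvs x /=; first by move=> ->; apply: submod0.
move=> [c [w [hw ->]]]; apply: submodD (submodZ _ _ _) _ => //; first by apply/hvs/mem_head.
by apply: IHvs hw => u hu; apply/hvs; rewrite in_cons hu orbT.
Qed.

Lemma in_span_cat vs1 vs2 x y :
  in_span vs1 x -> in_span vs2 y -> in_span (vs1 ++ vs2) (x + y).
Proof.
elim: vs1 x => [|v vs1 IHvs1] x /=; first by move=> -> hy; rewrite add0r.
by move=> [c [w [hw ->]]] hy; exists c, (w + y); rewrite addrA; split; first exact: IHvs1.
Qed.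

Lemma fin_gen_span : fin_gen V -> exists vs, forall x, in_span vs x.
Proof.
move=> [vs hvs]; exists vs => x; have [c ->] := hvs x.
elim: vs c {hvs} => [|v vs IHvs] c /=; first by rewrite big_ord0.
rewrite big_ord_recl; exists (c ord0), (\sum_(i < size vs) c (lift ord0 i) *: vs`_i).
by split; first exact: IHvs.
Qed.

End Submodules.

Lemma in_span_linear (R : comNzRingType) (U W : lmodType R) (f : {linear U -> W}) vs x :
  in_span vs x -> in_span (map f vs) (f x).
Proof.
elim: vs x => [|v vs IHvs] x /=; first by move=> ->; rewrite linear0.
by move=> [c [w [hw ->]]]; exists c, (f w); rewrite linearP; split; first exact: IHvs.
Qed.

Lemma ideal_mul_mod_linear (R : comNzRingType) (U W : lmodType R) (f : {linear U -> W})
    (I : R -> Prop) x :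
  ideal_mul_mod (M:=U) I x -> ideal_mul_mod (M:=W) I (f x).
Proof.
have hN : submodule (fun y => ideal_mul_mod (M:=W) I (f y)).
  split; [|split] => [|y z hy hz|r y hy]; rewrite ?linear0 ?linearD ?linearZ.
  - exact: submod0 (ideal_mul_mod_submodule _ _).
  - exact: submodD (ideal_mul_mod_submodule _ _) hy hz.
  - exact: submodZ (ideal_mul_mod_submodule _ _) hy.
move=> hx; apply: (submod_gen_min hN _ hx) => _ [a [y [ha ->]]].
by rewrite linearZ; apply: mem_ideal_mul_mod.
Qed.

Lemma linear_image_submodule (R : comNzRingType) (U W : lmodType R) (f : {linear U -> W})
    (N : U -> Prop) :
  submodule N -> submodule (fun y => exists z, N z /\ y = f z).
Proof.
move=> hN; split; [|split].
- by exists 0; rewrite linear0; split; first exact: submod0.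
- move=> _ _ [z1 [h1 ->]] [z2 [h2 ->]]; exists (z1 + z2).
  by rewrite linearD; split; first exact: submodD.
- move=> r _ [z [hz ->]]; exists (r *: z).
  by rewrite linearZ; split; first exact: submodZ.
Qed.

Section NoetherianModules.
Variable R : comNzRingType.
Hypothesis hR : noetherian R.
Variable V : lmodType R.
Implicit Types (N U : V -> Prop) (x y : V).

Definition noetherian_mod : Prop :=
  forall N : nat -> V -> Prop, (forall n, submodule (N n)) ->
    (forall n x, N n x -> N n.+1 x) ->
    exists n0, forall n x, (n0 <= n)%N -> N n x -> N n0 x.

Lemma chain_le (N : nat -> V -> Prop) : (forall n x, N n x -> N n.+1 x) ->
  forall i j x, (i <= j)%N -> N i x -> N j x.
Proof.
move=> hN i j x; elim: j => [|j IHj]; first by rewrite leqn0 => /eqP <-.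
by rewrite leq_eqVlt => /orP [/eqP <- //|hij] hx; apply/hN/IHj.
Qed.

(* Induction on the spanning list: the coefficients of the first generator v
   form an ascending chain of ideals, and what remains lies in the span of the
   other generators. *)
Lemma in_span_chain_stationary vs (N : nat -> V -> Prop) :
  (forall n, submodule (N n)) -> (forall n x, N n x -> N n.+1 x) ->
  (forall n x, N n x -> in_span vs x) ->
  exists n0, forall n x, (n0 <= n)%N -> N n x -> N n0 x.
Proof.
elim: vs N => [|v vs IHvs] N hN hchain hspan.
  by exists 0%N => n x _ /[dup] /hspan -> _; apply: submod0.
have hspan_sub := in_span_submodule vs.
pose A n c := exists w, in_span vs w /\ N n (c *: v + w).
have hA n : ideal (A n).
  split; [|split].
  - by exists 0; rewrite scale0r addr0; split; apply: submod0.
  - move=> c d [w [hw h1]] [u [hu h2]]; exists (w + u).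
    by rewrite scalerDl addrACA; split; apply: submodD.
  - move=> r c [w [hw h]]; exists (r *: w).
    by rewrite -scalerA -scalerDr; split; apply: submodZ.
have hAchain n c : A n c -> A n.+1 c.
  by move=> [w [hw h]]; exists w; split; last exact: hchain.
have [n1 hn1] := hR hA hAchain.
pose B n x := N n x /\ in_span vs x.
have hB n : submodule (B n).
  split; [|split] => [|x y [? ?] [? ?]|r x [? ?]].
  - by split; apply: submod0.
  - by split; apply: submodD.
  - by split; apply: submodZ.
have hBchain n x : B n x -> B n.+1 x by move=> [h1 h2]; split; first exact: hchain.
have [n2 hn2] := IHvs B hB hBchain (fun _ _ h => h.2).
exists (maxn n1 n2) => n x hn hx.
have [c [w [hw ex]]] := hspan n x hx.
have hc : A n c by exists w; rewrite -ex.
have [w' [hw' hN']] := hn1 n c (leq_trans (leq_maxl _ _) hn) hc.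
have hd : B n (w - w').
  split; last exact: submodB.
  have -> : w - w' = x - (c *: v + w') by rewrite ex opprD addrACA subrr add0r.
  exact: submodB (chain_le hchain (leq_trans (leq_maxl _ _) hn) hN').
have [hd' _] := hn2 n _ (leq_trans (leq_maxr _ _) hn) hd.
have -> : x = (c *: v + w') + (w - w') by rewrite ex [w - w']addrC addrA addrK.
exact: submodD (chain_le hchain (leq_maxl _ _) hN') (chain_le hchain (leq_maxr _ _) hd').
Qed.

Lemma noetherian_in_span vs : (forall x, in_span vs x) -> noetherian_mod.
Proof. by move=> hvs N hN hchain; apply: in_span_chain_stationary hN hchain _ => n x _. Qed.

End NoetherianModules.

(* If U were not finitely generated, choice would give an infinite strictly
   ascending chain of spans of elements of U. *)
Lemma noetherian_mod_fin_span (R : comNzRingType) (V : lmodType R) (U : V -> Prop) :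
  noetherian_mod V -> submodule U -> exists vs, forall x, U x <-> in_span vs x.
Proof.
move=> hV hU; apply: NNPP => hno.
have hnext vs : exists y, (forall x, in_span vs x -> U x) -> U y /\ ~ in_span vs y.
  case: (classic (forall x, in_span vs x -> U x)) => [hvsU|hvsU]; last by exists 0.
  apply: NNPP => hy; apply: hno; exists vs => x; split => [hx|/hvsU //].
  by apply: NNPP => hnx; apply: hy; exists x.
pose next vs := proj1_sig (constructive_indefinite_description _ (hnext vs)).
have hnext' vs : (forall x, in_span vs x -> U x) -> U (next vs) /\ ~ in_span vs (next vs).
  exact: proj2_sig (constructive_indefinite_description _ (hnext vs)).
pose fix vs n := if n is n'.+1 then next (vs n') :: vs n' else [::].
have hvsU n x : in_span (vs n) x -> U x.
  elim: n x => [|n IHn] x /=; first by move=> ->; apply: submod0.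
  move=> [c [w [hw ->]]]; apply: submodD (submodZ _ _ _) (IHn w hw) => //.
  by have [] := hnext' _ IHn.
have hchain n x : in_span (vs n) x -> in_span (vs n.+1) x.
  by move=> hx; exists 0, x; rewrite scale0r add0r.
have [n0 hn0] := hV _ (fun n => in_span_submodule _) hchain.
have [_ hnew] := hnext' _ (hvsU n0).
by apply/hnew/(hn0 n0.+1) => //; apply: mem_in_span; rewrite mem_head.
Qed.

Section Saturation.
Variable R : comNzRingType.
Variable V : lmodType R.
Hypothesis hV : noetherian_mod V.
Implicit Types (U : V -> Prop) (J : R -> Prop) (a b : R) (y : V).

Definition multiples a : V -> Prop := fun w => exists z, w = a *: z.

Definition saturation U J : V -> Prop :=
  fun y => exists t, forall b, ideal_pow J t b -> U (b *: y).

Lemma multiples_submodule a : submodule (multiples a).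
Proof.
split; [|split].
- by exists 0; rewrite scaler0.
- by move=> _ _ [z1 ->] [z2 ->]; exists (z1 + z2); rewrite scalerDr.
- by move=> r _ [z ->]; exists (r *: z); rewrite !scalerA mulrC.
Qed.

(* The colon modules U :_V a^j form an ascending chain; n0 is where it becomes
   stationary. *)
Lemma expr_saturation_closed a U : submodule U -> exists n0, forall y,
  (exists t, U (a ^+ t *: y)) -> submod_add (multiples (a ^+ n0)) U y -> U y.
Proof.
move=> hU; pose N j z := U (a ^+ j *: z).
have hN j : submodule (N j).
  split; [|split] => [|z1 z2 h1 h2|r z hz]; rewrite /N ?scaler0 ?scalerDr.
  - exact: submod0.
  - exact: submodD.
  - by rewrite scalerA mulrC -scalerA; apply: submodZ.
have hchain j z : N j z -> N j.+1 z by rewrite /N exprS -scalerA; apply: submodZ.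
have [n0 hn0] := hV hN hchain.
exists n0 => y [t ht] [_ [u [[z ->] [hu ey]]]].
have hz : N (t + n0) z.
  rewrite /N exprD -scalerA -[a ^+ n0 *: z](addrK u) -ey scalerDr scalerN.
  by apply: submodB ht _ => //; apply: submodZ.
have hz0 : U (a ^+ n0 *: z) := hn0 _ _ (leq_addl t n0) hz.
by rewrite ey; apply: submodD.
Qed.

(* Induction on generators of J: a generator a is removed from J at the cost of
   enlarging U to a^n0 V + U, using J^(n + n0) in J'^n + a^n0 R. *)
Lemma saturation_closed gs J U :
  (forall b, J b <-> in_span (V:=R^o) gs b) -> submodule U -> exists n, forall y,
  saturation U J y -> submod_add (ideal_mul_mod (M:=V) (ideal_pow J n)) U y -> U y.
Proof.
elim: gs J U => [|a gs IHgs] J U hJ hU.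
  exists 1%N => y _ [v [u [hv [hu ->]]]].
  by rewrite (ideal_mul_mod_zero _ hv) ?add0r // => b; apply: ideal_pow_zero => c /hJ.
pose J' := in_span (V:=R^o) gs.
have sJ'J b : J' b -> J b by move=> hb; apply/hJ; exists 0, b; rewrite scale0r add0r.
have hJa : J a by apply/hJ/mem_in_span/mem_head.
have hJsplit c : J c -> exists c' r, J' c' /\ c = c' + r * a.
  by move=> /hJ [r [c' [hc' ->]]]; exists c', r; rewrite addrC.
have [n0 hn0] := expr_saturation_closed a hU.
have hU' := submod_add_submodule (multiples_submodule (a ^+ n0)) hU.
have [n1 hn1] := IHgs J' _ (fun b => conj id id) hU'.
exists (n1 + n0)%N => y [t ht] [v [u [hv [hu ey]]]].
have hv' : submod_add (ideal_mul_mod (M:=V) (ideal_pow J' n1)) (multiples (a ^+ n0)) v.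
  apply: (submod_gen_min (submod_add_submodule (ideal_mul_mod_submodule _ _)
    (multiples_submodule _)) _ hv) => _ [b [x [hb ->]]].
  have [c [r [hc ->]]] := ideal_pow_add_split (in_span_submodule gs) hJsplit (erefl _) hb.
  exists (c *: x), (a ^+ n0 *: (r *: x)); split; first exact: mem_ideal_mul_mod.
  by split; [exists (r *: x)|rewrite scalerDl scalerA mulrC].
have hyU' : submod_add (multiples (a ^+ n0)) U y.
  apply: hn1.
    by exists t => b hb; apply/submod_addr/ht/(ideal_powS sJ'J) => //; apply: multiples_submodule.
  case: hv' => [v1 [w [hv1 [hw ev]]]]; exists v1, (w + u).
  by rewrite ey ev addrA; split; last by split; first by exists w, u.
by apply: hn0 hyU'; exists t; apply/ht/expr_ideal_pow.
Qed.

End Saturation.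

Section FfunModule.
Variable R : comNzRingType.
Variable M : lmodType R.
Variable s : nat.
Implicit Types (f : {ffun 'I_s -> M}) (v : M).

Definition ffun_delta (i : 'I_s) v : {ffun 'I_s -> M} := [ffun k => if k == i then v else 0].

Fact ffun_delta_is_linear i : linear (ffun_delta i).
Proof.
by move=> c v w; apply/ffunP => k; rewrite !ffunE; case: (k == i); rewrite ?scaler0 ?addr0.
Qed.

HB.instance Definition _ i := GRing.isSemilinear.Build R M {ffun 'I_s -> M} _ (ffun_delta i)
  (GRing.semilinear_linear (ffun_delta_is_linear i)).

Lemma ffun_delta_sum f : f = \sum_i ffun_delta i (f i).
Proof.
apply/ffunP => k; rewrite sum_ffunE (bigD1 k) //= ffunE eqxx big1 ?addr0 // => j hj.
by rewrite ffunE eq_sym (negbTE hj).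
Qed.

Lemma ffun_submodule (N : M -> Prop) :
  submodule N -> submodule (fun f : {ffun 'I_s -> M} => forall i, N (f i)).
Proof.
move=> hN; split; [|split] => [i|f g hf hg i|r f hf i]; rewrite ffunE.
- exact: submod0.
- exact: submodD.
- exact: submodZ.
Qed.

Lemma ffun_ideal_mul_mod (I : R -> Prop) f :
  (forall i, ideal_mul_mod (M:=M) I (f i)) -> ideal_mul_mod (M:={ffun 'I_s -> M}) I f.
Proof.
move=> hf; rewrite (ffun_delta_sum f).
apply: submod_sum (ideal_mul_mod_submodule _ I) _ => i.
exact: (ideal_mul_mod_linear (ffun_delta i) (hf i)).
Qed.

Lemma noetherian_ffun : noetherian R -> fin_gen M -> noetherian_mod {ffun 'I_s -> M}.
Proof.
move=> hR /fin_gen_span [vs hvs].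
apply: (noetherian_in_span hR (vs := flatten [seq map (ffun_delta i) vs | i <- index_enum 'I_s])).
move=> f; rewrite (ffun_delta_sum f); elim: (index_enum 'I_s) => [|i r IHr].
  by rewrite big_nil.
by rewrite big_cons; apply: in_span_cat (in_span_linear _ (hvs _)) IHr.
Qed.

End FfunModule.

Definition powH0 (R : comNzRingType) (M : lmodType R) (m : R -> Prop) (n : nat) : M -> Prop :=
  submod_add (ideal_mul_mod (M:=M) (ideal_pow m n)) (H0 (M:=M) m).

Section KeyStep.
Variable R : comNzRingType.
Variable M : lmodType R.
Variable m : R -> Prop.
Implicit Types (x w : M) (a b : R).

Lemma powH0_anti p q x : (q <= p)%N -> powH0 m p x -> powH0 m q x.
Proof. by move=> hqp; apply: submod_addS; apply: ideal_mul_modS => b; apply: ideal_pow_anti. Qed.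

Lemma H0_common_exponent (xs : seq M) : (forall x, x \in xs -> H0 m x) ->
  exists t, forall x b, x \in xs -> ideal_pow m t b -> b *: x = 0.
Proof.
elim: xs => [|x xs IHxs] hxs; first by exists 0%N.
have [t1 ht1] := hxs x (mem_head _ _).
have [t2 ht2] : exists t, forall y b, y \in xs -> ideal_pow m t b -> b *: y = 0.
  by apply: IHxs => y hy; apply: hxs; rewrite in_cons hy orbT.
exists (maxn t1 t2) => y b; rewrite in_cons => /orP [/eqP ->|hy] hb.
  by apply: ht1; apply: ideal_pow_anti hb; rewrite leq_maxl.
by apply: ht2 => //; apply: ideal_pow_anti hb; rewrite leq_maxr.
Qed.

Variable gs : seq R.
Hypothesis hgs : forall a, m a <-> in_span (V:=R^o) gs a.

(* With t a common exponent for the g w, the elements a with m^t a w = 0 form an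
   ideal containing the generators, so m^(t+1) w = 0. *)
Lemma H0_of_generators w : (forall g, g \in gs -> H0 m (g *: w)) -> H0 m w.
Proof.
move=> hw; have [t ht] : exists t, forall x b,
    x \in [seq g *: w | g <- gs] -> ideal_pow m t b -> b *: x = 0.
  by apply: H0_common_exponent => _ /mapP [g hg ->]; apply: hw.
have hI : ideal (fun a => forall b, ideal_pow m t b -> b *: (a *: w) = 0).
  split; [|split] => [b _|a c ha hc b hb|r a ha b hb]; rewrite ?scale0r ?scaler0 //.
    by rewrite scalerDl scalerDr ha ?hc ?addr0.
  by rewrite -scalerA scalerA mulrC -scalerA ha ?scaler0.
have hm a : m a -> forall b, ideal_pow m t b -> b *: (a *: w) = 0.
  move=> /hgs; apply: (in_span_min (V:=R^o) hI) => g hg b hb.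
  exact: ht (map_f _ hg) hb.
exists t.+1 => c hc; apply: (ideal_gen_min (I := fun c => c *: w = 0) _ _ hc).
  split; [|split] => [|a c' ha hc'|r a ha]; rewrite ?scale0r //.
    by rewrite scalerDl ha hc' addr0.
  by rewrite -scalerA ha scaler0.
by move=> _ [a [b [ha [hb ->]]]]; rewrite mulrC -scalerA; apply: hm.
Qed.

Definition gens_map x : {ffun 'I_(size gs) -> M} := [ffun i : 'I_(size gs) => gs`_i *: x].

Fact gens_map_is_linear : linear gens_map.
Proof. by move=> r x y; apply/ffunP => i; rewrite !ffunE scalerDr !scalerA mulrC. Qed.

HB.instance Definition _ := GRing.isSemilinear.Build R M {ffun 'I_(size gs) -> M} _ gens_map
  (GRing.semilinear_linear gens_map_is_linear).

Lemma powH0_colon (hR : noetherian R) (hfg : fin_gen M) l : exists n, forall x,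
  (forall a, m a -> powH0 m n (a *: x)) -> powH0 m l x.
Proof.
pose U := submod_add (fun y => exists z, ideal_mul_mod (M:=M) (ideal_pow m l) z /\ y = gens_map z)
  (fun h : {ffun 'I_(size gs) -> M} => forall i, H0 m (h i)).
have hH0s := ffun_submodule (size gs) (H0_submodule M m).
have hU : submodule U.
  exact: submod_add_submodule (linear_image_submodule _ (ideal_mul_mod_submodule _ _)) hH0s.
have [n hn] := saturation_closed (noetherian_ffun (s := size gs) hR hfg) hgs hU.
exists n => x hx.
have hsat : saturation U m (gens_map x).
  exists l => b hb; apply: submod_addl hH0s _.
  by exists (b *: x); rewrite linearZ; split; first exact: mem_ideal_mul_mod.
have hadd : submod_add (ideal_mul_mod (ideal_pow m n)) U (gens_map x).
  have /fin_all_exists [P hP] : forall i : 'I_(size gs), exists p : M * M,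
      [/\ ideal_mul_mod (ideal_pow m n) p.1, H0 m p.2 & gs`_i *: x = p.1 + p.2].
    move=> i; have hgi : m gs`_i by apply/hgs/mem_in_span/mem_nth.
    by have [v [h [hv [hh e]]]] := hx _ hgi; exists (v, h).
  exists [ffun i => (P i).1], [ffun i => (P i).2]; split.
    by apply: ffun_ideal_mul_mod => i; rewrite ffunE; case: (hP i).
  split; last by apply/ffunP => i; rewrite !ffunE; case: (hP i).
  apply: submod_addr => [|i]; last by rewrite ffunE; case: (hP i).
  exact: linear_image_submodule (ideal_mul_mod_submodule _ _).
have [_ [h [[z [hz ->]] [hh e]]]] := hn _ hsat hadd.
exists z, (x - z); split => //; split; last by rewrite addrC subrK.
apply: H0_of_generators => g hg; rewrite -(nth_index 0 hg).
have hi : (index g gs < size gs)%N by rewrite index_mem.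
have := congr1 (fun f : {ffun 'I_(size gs) -> M} => f (Ordinal hi)) e; rewrite !ffunE /= => ei.
by rewrite scalerBr ei addrAC subrr add0r.
Qed.

End KeyStep.

Lemma powH0_colon_pow (R : comNzRingType) (M : lmodType R) (m : R -> Prop) :
  noetherian R -> ideal m -> fin_gen M -> forall k l, exists n, (l < n)%N /\
  forall x : M, (forall b, ideal_pow m k b -> powH0 m n (b *: x)) -> powH0 m l x.
Proof.
move=> hR hm hfg; have [gs hgs] := noetherian_mod_fin_span (V:=R^o) hR hm.
elim=> [|k IHk] l.
  by exists l.+1; split => // x /(_ 1 I); rewrite scale1r; apply: powH0_anti.
have [n1 hn1] := powH0_colon hgs hR hfg l.
have [n [hn hn2]] := IHk (maxn n1 l).
exists n; split; first exact: leq_ltn_trans (leq_maxr _ _) hn.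
move=> x hx; apply: hn1 => a ha; apply: (powH0_anti (leq_maxl n1 l)); apply: hn2 => b hb.
by rewrite scalerA mulrC; apply: hx; apply: ideal_pow_mul.
Qed.

Theorem lemma2p3 (R : comNzRingType) (M : lmodType R) (m : R -> Prop)
  (hnoeth : noetherian R) (hloc : local_ring m) (hfg : fin_gen M)
  (hdim : mod_dim_ge M 1) (k l : nat) (hk : (0 < k)%N) (hl : (0 < l)%N) :
  exists n3 : nat, (l < n3)%N /\
    forall x : M,
      submod_colon (submod_add (ideal_mul_mod (M:=M) (ideal_pow m n3)) (H0 (M:=M) m))
                   (ideal_pow m k) x ->
      submod_add (ideal_mul_mod (M:=M) (ideal_pow m l)) (H0 (M:=M) m) x.
Proof.
have [[hm _] _] := hloc.
have [n [hln hn]] := powH0_colon_pow hnoeth hm hfg k l.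
by exists n; split => // x hx; apply: hn.
Qed.
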